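(* Let $\alpha,a,b>0$ with $\alpha\le a<2\alpha$ and $ab\in\left[\frac{M-1}{M},\frac{M}{M+1}\right[$ for some integer $M\ge2$, and let $\kappa$ be the largest integer with $(1-ab)\kappa\le b\alpha$. Let $h:\mathbb{R}\to\mathbb{C}$ satisfy $h(x)=0$ for all $$x\notin -\Big(\bigcup_{k=1}^{\kappa}\big[\tfrac{k}{b},ak+\alpha\big]\Big)\cup[-\alpha,\alpha]\cup\bigcup_{k=1}^{\kappa}\big[\tfrac{k}{b},ak+\alpha\big],$$ where $-S=\{-s:s\in S\}$ and an empty union is empty. Then: (a) $h(x)=h(x+a)=0$ for every $n\in\{1,\dots,\kappa\}$ and $x\in\,]\alpha+a(n-1),\frac{n}{b}[$, and for every $n\in\{-1,\dots,-\kappa\}$ and $x\in\,]\frac{n}{b}-a,an-\alpha[$; (b) $h(x)=h(x+a)=0$ for every $n\in\{\pm(\kappa+1),\dots,\pm(M-1)\}$ and $x\in[\frac{n}{b}-a,\frac{n}{b}]$. *)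

From Stdlib Require Import Reals ZArith Lra Lia.
From Coquelicot Require Import Coquelicot.
Open Scope R_scope.

Definition supp_set (alpha a b : R) (kappa : Z) (x : R) : Prop :=
  (exists k : Z, (1 <= k <= kappa)%Z /\ IZR k / b <= - x <= a * IZR k + alpha)
  \/ (- alpha <= x <= alpha)
  \/ (exists k : Z, (1 <= k <= kappa)%Z /\ IZR k / b <= x <= a * IZR k + alpha).

Definition is_kappa (alpha a b : R) (kappa : Z) : Prop :=
  (1 - a * b) * IZR kappa <= b * alpha /\
  forall k : Z, (1 - a * b) * IZR k <= b * alpha -> (k <= kappa)%Z.

From Stdlib Require Import Reals ZArith Lra Lia.
From Coquelicot Require Import Coquelicot.
Open Scope R_scope.

(** The support intervals [[k/b, a k + alpha]] are ordered and, since [a b < 1],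
    disjoint: a point strictly between the [c]-th right endpoint and the
    [(c+1)]-th left endpoint lies in no interval, and a point beyond the
    [kappa]-th right endpoint lies in none of the [kappa] intervals.  Part (a)
    places [x] and [x + a] in consecutive such gaps; part (b) uses that for
    [n > kappa] the maximality of [kappa] gives [n/b - a n > alpha], so that
    [[n/b - a, n/b + a]] lies beyond [a (n-1) + alpha].  Negative indices follow
    from the symmetry [x |-> -x] of the support, which exchanges [x] and
    [-(x + a) + a]. *)

Lemma supp_set_opp (alpha a b : R) (kappa : Z) (x : R) :
  supp_set alpha a b kappa x -> supp_set alpha a b kappa (- x).
Proof.
  unfold supp_set; rewrite Ropp_involutive.
  intros [Hneg | [Hmid | Hpos]]; [right; right | right; left; lra | left]; assumption.
Qed.

Lemma is_kappa_nonneg (alpha a b : R) (kappa : Z) :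
  0 < alpha -> 0 < b -> is_kappa alpha a b kappa -> (0 <= kappa)%Z.
Proof.
  intros Halpha Hb [_ Hmax]; apply Hmax.
  rewrite Rmult_0_r; apply Rlt_le, Rmult_lt_0_compat; assumption.
Qed.

Lemma is_kappa_lt_gap (alpha a b : R) (kappa n : Z) :
  0 < b -> is_kappa alpha a b kappa -> (kappa < n)%Z ->
  a * IZR n + alpha < IZR n / b.
Proof.
  intros Hb [_ Hmax] Hn.
  assert (Hgt : b * alpha < (1 - a * b) * IZR n).
  { apply Rnot_le_lt; intros Hle; specialize (Hmax n Hle); lia. }
  replace ((1 - a * b) * IZR n) with (b * (IZR n / b - a * IZR n)) in Hgt
    by (field; lra).
  apply Rmult_lt_reg_l in Hgt; lra.
Qed.

Section PositiveGaps.

Variables (alpha a b : R) (kappa : Z).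
Hypotheses (Halpha : 0 < alpha) (Ha : 0 < a) (Hb : 0 < b).

Let supp := supp_set alpha a b kappa.

Lemma not_supp_set_pos (y : R) : alpha < y ->
  (forall k : Z, (1 <= k <= kappa)%Z -> y < IZR k / b \/ a * IZR k + alpha < y) ->
  ~ supp y.
Proof.
  intros Hy Hgap [[k [Hk Hky]] | [Hmid | [k [Hk Hky]]]].
  - assert (0 < IZR k / b).
    { apply Rdiv_lt_0_compat; [apply IZR_lt; lia | exact Hb]. }
    lra.
  - lra.
  - destruct (Hgap k Hk); lra.
Qed.

Lemma not_supp_set_between (c : Z) (y : R) : (0 <= c)%Z ->
  a * IZR c + alpha < y < IZR (c + 1) / b -> ~ supp y.
Proof.
  intros Hc [Hleft Hright].
  assert (0 <= a * IZR c) by (apply Rmult_le_pos; [lra | apply IZR_le; lia]).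
  apply not_supp_set_pos; [lra |].
  intros k _; destruct (Z_le_gt_dec k c) as [Hkc | Hkc].
  - right; assert (a * IZR k <= a * IZR c)
      by (apply Rmult_le_compat_l; [lra | apply IZR_le; lia]).
    lra.
  - left; assert (IZR (c + 1) / b <= IZR k / b).
    { apply Rmult_le_compat_r; [apply Rlt_le, Rinv_0_lt_compat, Hb |].
      apply IZR_le; lia. }
    lra.
Qed.

Lemma not_supp_set_beyond (c : Z) (y : R) : (0 <= c)%Z -> (kappa <= c)%Z ->
  a * IZR c + alpha < y -> ~ supp y.
Proof.
  intros Hc Hkappa Hy.
  assert (0 <= a * IZR c) by (apply Rmult_le_pos; [lra | apply IZR_le; lia]).
  apply not_supp_set_pos; [lra |].
  intros k Hk; right.
  assert (a * IZR k <= a * IZR c)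
    by (apply Rmult_le_compat_l; [lra | apply IZR_le; lia]).
  lra.
Qed.

Lemma not_supp_set_shift_gap (n : Z) (x : R) : (1 <= n)%Z -> a * b < 1 ->
  alpha + a * (IZR n - 1) < x < IZR n / b -> ~ supp x /\ ~ supp (x + a).
Proof.
  intros Hn Hab Hx; split.
  - apply (not_supp_set_between (n - 1)); [lia |].
    rewrite minus_IZR, Z.sub_add; lra.
  - apply (not_supp_set_between n); [lia |].
    assert (IZR n / b + a < IZR (n + 1) / b).
    { rewrite plus_IZR.
      replace ((IZR n + 1) / b) with (IZR n / b + a + (1 - a * b) / b)
        by (field; lra).
      assert (0 < (1 - a * b) / b) by (apply Rdiv_lt_0_compat; lra).
      lra. }
    lra.
Qed.

Lemma not_supp_set_shift_beyond (n : Z) (x : R) :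
  is_kappa alpha a b kappa -> (kappa < n)%Z ->
  IZR n / b - a <= x <= IZR n / b -> ~ supp x /\ ~ supp (x + a).
Proof.
  intros Hk Hn Hx.
  pose proof (is_kappa_nonneg alpha a b kappa Halpha Hb Hk).
  pose proof (is_kappa_lt_gap alpha a b kappa n Hb Hk Hn).
  assert (Hy : a * IZR (n - 1) + alpha < x) by (rewrite minus_IZR; lra).
  split; apply (not_supp_set_beyond (n - 1)); try lia; lra.
Qed.

End PositiveGaps.

Lemma not_supp_set_shift_opp (alpha a b : R) (kappa : Z) (x : R) :
  ~ supp_set alpha a b kappa (- (x + a)) /\ ~ supp_set alpha a b kappa (- (x + a) + a) ->
  ~ supp_set alpha a b kappa x /\ ~ supp_set alpha a b kappa (x + a).
Proof.
  replace (- (x + a) + a) with (- x) by ring.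
  intros [Hxa Hx]; split; intros Hs; [apply Hx | apply Hxa]; exact (supp_set_opp _ _ _ _ _ Hs).
Qed.

Theorem lemma3p3 (alpha a b : R) (M kappa : Z) (h : R -> C) :
  0 < alpha -> 0 < a -> 0 < b ->
  alpha <= a < 2 * alpha ->
  (2 <= M)%Z ->
  (IZR M - 1) / IZR M <= a * b < IZR M / (IZR M + 1) ->
  is_kappa alpha a b kappa ->
  (forall x : R, ~ supp_set alpha a b kappa x -> h x = 0%C) ->
  (* (a) *)
  ((forall n : Z, (1 <= n <= kappa)%Z ->
      forall x : R, alpha + a * (IZR n - 1) < x < IZR n / b ->
        h x = 0%C /\ h (x + a) = 0%C)
   /\ (forall n : Z, (- kappa <= n <= -1)%Z ->
      forall x : R, IZR n / b - a < x < a * IZR n - alpha ->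
        h x = 0%C /\ h (x + a) = 0%C))
  /\
  (* (b) *)
  (forall n : Z, ((kappa + 1 <= n <= M - 1)%Z \/ (- (M - 1) <= n <= - (kappa + 1))%Z) ->
      forall x : R, IZR n / b - a <= x <= IZR n / b ->
        h x = 0%C /\ h (x + a) = 0%C).
Proof.
  intros Halpha Ha Hb _ HM [_ HabM] Hk Hh.
  assert (Hab : a * b < 1).
  { assert (IZR M / (IZR M + 1) < 1); [| lra].
    assert (2 <= IZR M) by (apply IZR_le; lia).
    apply Rmult_lt_reg_r with (IZR M + 1); [lra |].
    field_simplify; lra. }
  assert (Hzero : forall x, ~ supp_set alpha a b kappa x /\
      ~ supp_set alpha a b kappa (x + a) -> h x = 0%C /\ h (x + a) = 0%C)
    by (intros x [Hx Hxa]; split; apply Hh; assumption).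
  assert (Hdiv_opp : forall n : Z, IZR (- n) / b = - (IZR n / b))
    by (intros n; rewrite opp_IZR; apply Rdiv_opp_l).
  split; [split |]; intros n Hn x Hx; apply Hzero.
  - apply (not_supp_set_shift_gap alpha a b kappa Halpha Ha Hb n); [lia | assumption | assumption].
  - apply not_supp_set_shift_opp,
      (not_supp_set_shift_gap alpha a b kappa Halpha Ha Hb (- n)); [lia | assumption |].
    rewrite Hdiv_opp, opp_IZR; lra.
  - destruct Hn as [Hn | Hn].
    + apply (not_supp_set_shift_beyond alpha a b kappa Halpha Ha Hb n); [assumption | lia | assumption].
    + apply not_supp_set_shift_opp,
        (not_supp_set_shift_beyond alpha a b kappa Halpha Ha Hb (- n)); [assumption | lia |].
      rewrite Hdiv_opp; lra.
Qed.
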